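(* Fix the parameters $S_1,\dots,S_{\mathcal K}$, $\lambda_1,\dots,\lambda_{\mathcal K}$ of the storage model in the context. Suppose that the linear system \[ \sum_{j=1}^{\kappa_i}\alpha_{ij}=\lambda_i\ (i=1,\dots,\mathcal K),\qquad \sum_{i=1}^{\mathcal K}\sum_{j=1}^{\kappa_i}\alpha_{ij}\,\delta_{\ell,s^i_j}=\tfrac1n\ (\ell=1,\dots,n) \] has no positive solution $(\alpha_{ij})$ (i.e. no solution with all $\alpha_{ij}>0$). Then for any routing policy $P$, the shape process $\tilde X(t)$ with routing policy $P$ is not positive recurrent.
   Context: Storage model: there are $n$ nodes $\{1,\dots,n\}$ and $\mathcal K\ge1$ non-empty neighborhoods $S_1,\dots,S_{\mathcal K}\subset\{1,\dots,n\}$ with $\bigcup_i S_i=\{1,\dots,n\}$; $\kappa_i=|S_i|$ and $S_i=\{s^i_1,\dots,s^i_{\kappa_i}\}$. Items arrive at $S_i$ as independent Poisson processes with rates $\lambda_i>0$, $\sum_{i=1}^{\mathcal K}\lambda_i=1$. Let $\Lambda_i=\{p\in\mathbb R^{\kappa_i}:p_j\ge0,\sum_j p_j=1\}$. A routing policy is a map $P:\mathbb N^n\to\Lambda_1\times\dots\times\Lambda_{\mathcal K}$ with $P(x+c\mathbf 1)=P(x)$ for all integers $c$; an item arriving at $S_i$ when the configuration is $x$ is stored at node $s^i_j$ with probability $p^{(i)}_j(x)$, independently for each arrival (the policy need not be local). $X(t)$ is the vector of node loads, $M(t)=\frac1n\sum_iX_i(t)$, the shape is $\tilde X(t)=X(t)-M(t)\mathbf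 1$, and $\tilde X^e(m)$ is the shape observed at successive arrival moments. With $\tau=\inf\{m>0:\tilde X^e(m)=0\}$, the process is positive recurrent if $\mathbf E(\tau\mid\tilde X^e(0)=x)<\infty$ for every state $x$. $\delta_{\ell,m}$ is the Kronecker delta. *)

From HB Require Import structures.
From mathcomp Require Import all_boot all_order all_algebra.
From mathcomp Require Import reals.
Set Implicit Arguments. Unset Strict Implicit. Unset Printing Implicit Defensive.
Import Order.TTheory GRing.Theory Num.Theory.
Local Open Scope ring_scope.

Notation config n := {ffun 'I_n -> nat}.

Definition store n (x : config n) (v : 'I_n) : config n :=
  [ffun u => (x u + (u == v))%N].

Definition shift n (x : config n) (c : nat) : config n :=
  [ffun u => (x u + c)%N].

(* The shape x - M(x) 1 is zero iff all loads are equal. *)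
Definition balanced n (x : config n) : bool :=
  [forall u, forall w, x u == x w].

(* A routing policy P : N^n -> Lambda_1 x ... x Lambda_K, where the
   probability vector p^(i) in Lambda_i is indexed by the nodes of S_i:
   P x i v = probability of storing at node v in S_i (0 outside S_i). *)
Definition routing_policy (R : realType) n K (S : 'I_K -> {set 'I_n})
    (P : config n -> 'I_K -> 'I_n -> R) : Prop :=
  (forall x i v, 0 <= P x i v) /\
  (forall x i v, v \notin S i -> P x i v = 0) /\
  (forall x i, \sum_(v in S i) P x i v = 1) /\
  (forall x (c : nat) i v, P (shift x c) i v = P x i v).

(* surv lam S P m x = probability, starting the embedded chain at a
   configuration x, that the shape is not 0 at any of the arrival moments
   1..m, i.e. P_x(tau > m). *)
Fixpoint surv (R : realType) n K (lam : 'I_K -> R) (S : 'I_K -> {set 'I_n})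
    (P : config n -> 'I_K -> 'I_n -> R) (m : nat) (x : config n) : R :=
  match m with
  | O => 1
  | m'.+1 => \sum_(i < K) lam i * \sum_(v in S i)
      P x i v * (if balanced (store x v) then 0
                 else surv lam S P m' (store x v))
  end.

(* E(tau | start at x) < oo, using E tau = sum_{m>=0} P(tau > m)
   (valid for N u {oo}-valued tau); nonnegative terms, so finiteness
   is boundedness of the partial sums. *)
Definition finite_mean_return (R : realType) n K (lam : 'I_K -> R)
    (S : 'I_K -> {set 'I_n}) (P : config n -> 'I_K -> 'I_n -> R)
    (x : config n) : Prop :=
  exists B : R, forall N : nat, \sum_(m < N) surv lam S P m x <= B.

Definition positive_recurrent (R : realType) n K (lam : 'I_K -> R)
    (S : 'I_K -> {set 'I_n}) (P : config n -> 'I_K -> 'I_n -> R) : Prop :=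
  forall x : config n, finite_mean_return lam S P x.

From HB Require Import structures.
From mathcomp Require Import all_boot all_order all_algebra.
From mathcomp Require Import reals.
From mathcomp Require Import ring lra zify.
Import Order.TTheory GRing.Theory Num.Theory.
Local Open Scope ring_scope.
Set Implicit Arguments. Unset Strict Implicit. Unset Printing Implicit Defensive.

(* Suppose the shape is positive recurrent.  Then every nonempty proper set L
   of nodes satisfies lambda(L) < |L|/n, where lambda(L) is the total rate of
   the neighbourhoods contained in L.  Otherwise the sum Y_L of the shape
   coordinates over L drifts upwards: an arrival at a neighbourhood inside L
   raises it by 1 - |L|/n, any arrival lowers it by at most |L|/n.  Y_L vanishes
   on balanced configurations and has increments bounded by 1, so started at
   Y_L = 1 - |L|/n optional stopping gives P(tau > m) >= (1 - |L|/n)/(m + 1),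
   and E tau = sum_m P(tau > m) diverges.
   The inequalities lambda(L) < |L|/n are Hall's condition with slack for
   shipping lambda_i from each neighbourhood S_i to its nodes so that every node
   receives 1/n.  Removing a small amount from every edge keeps Hall's
   condition, Hall's theorem for such transport problems (by induction on the
   number of edges) then provides a feasible plan, and putting the small amount
   back makes it strictly positive: a positive solution of the linear system. *)

Section Transport.
Variables (R : realFieldType) (I J : finType).
Implicit Types (S : I -> {set J}) (a : I -> R) (b : J -> R) (T : {set J}).

Definition supply_within S a T := \sum_(i | S i \subset T) a i.

Definition demand_on b T := \sum_(j in T) b j.

Definition hall_condition S a b := forall T, supply_within S a T <= demand_on b T.

Definition transport_plan S a b (alpha : I -> J -> R) :=
  [/\ forall i j, 0 <= alpha i j, forall i j, j \notin S i -> alpha i j = 0,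
      forall i, \sum_j alpha i j = a i & forall j, \sum_i alpha i j = b j].

Lemma supply_within_setT S a : supply_within S a setT = \sum_i a i.
Proof. by apply: eq_bigl => i; rewrite subsetT. Qed.

Lemma demand_on_setT b : demand_on b setT = \sum_j b j.
Proof. by apply: eq_bigl => j; rewrite in_setT. Qed.

Lemma supply_within_D1 S a i0 T : supply_within S a T =
  (if S i0 \subset T then a i0 else 0) + \sum_(i | (i != i0) && (S i \subset T)) a i.
Proof. by rewrite /supply_within big_mkcond (bigD1 i0) //= big_mkcondr. Qed.

Lemma demand_on_modular b T1 T2 :
  demand_on b T1 + demand_on b T2 = demand_on b (T1 :|: T2) + demand_on b (T1 :&: T2).
Proof.
have dE T : demand_on b T = \sum_j (if j \in T then b j else 0) := big_mkcond _ _.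
rewrite !dE -!big_split; apply: eq_bigr => j _ /=.
by rewrite !inE; case: (j \in T1); case: (j \in T2); rewrite ?addr0 ?add0r.
Qed.

Section PartialSupply.
Variables (P : pred I) (S : I -> {set J}) (a : I -> R).
Hypothesis a_ge0 : forall i, 0 <= a i.

Lemma partial_supply_mono T1 T2 : T1 \subset T2 ->
  \sum_(i | P i && (S i \subset T1)) a i <= \sum_(i | P i && (S i \subset T2)) a i.
Proof.
move=> sT12; rewrite !big_mkcondr; apply: ler_sum => i _.
have [sST1|_] := boolP (S i \subset T1); first by rewrite (subset_trans sST1 sT12).
by case: ifP.
Qed.

Lemma partial_supply_supermodular T1 T2 :
  \sum_(i | P i && (S i \subset T1)) a i + \sum_(i | P i && (S i \subset T2)) a i <=
  \sum_(i | P i && (S i \subset T1 :|: T2)) a i +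
  \sum_(i | P i && (S i \subset T1 :&: T2)) a i.
Proof.
rewrite !big_mkcondr -!big_split; apply: ler_sum => i _ /=; rewrite subsetI.
have := a_ge0 i; case: (boolP (S i \subset T1)) => sT1.
  by rewrite (subset_trans sT1 (subsetUl _ _)); case: (S i \subset T2) => /=; lra.
case: (boolP (S i \subset T2)) => sT2 /=.
  by rewrite (subset_trans sT2 (subsetUr _ _)); lra.
by case: ifP; lra.
Qed.

End PartialSupply.

Lemma transport_plan_no_edges S a b : (forall i j, j \notin S i) ->
  (forall i, 0 <= a i) -> (forall j, 0 <= b j) -> \sum_i a i = \sum_j b j ->
  hall_condition S a b -> transport_plan S a b (fun _ _ => 0).
Proof.
move=> no_edge a_ge0 b_ge0 sum_ab hall.
have S_sub0 i : S i \subset set0 by apply/subsetP => j; rewrite (negbTE (no_edge i j)).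
have sum_a0 : \sum_i a i = 0.
  apply/le_anti; rewrite sumr_ge0 // andbT.
  by have := hall set0; rewrite /supply_within (eq_bigl _ _ S_sub0) /demand_on big_set0.
have a0 i : a i = 0 by apply: (psumr_eq0P (fun i _ => a_ge0 i) sum_a0).
have b0 j : b j = 0.
  by rewrite sum_a0 in sum_ab; apply: (psumr_eq0P (fun j _ => b_ge0 j) (esym sum_ab)).
by split=> // [i|j]; rewrite big1_eq ?a0 ?b0.
Qed.

Section ReduceEdge.
Variables (S : I -> {set J}) (a : I -> R) (b : J -> R) (i0 : I) (j0 : J).
Hypotheses (a_ge0 : forall i, 0 <= a i) (b_ge0 : forall j, 0 <= b j).
Hypotheses (hall : hall_condition S a b) (edge0 : j0 \in S i0).

Let others T := \sum_(i | (i != i0) && (S i \subset T)) a i.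

Let excess T := supply_within S a T + a i0 - demand_on b T.

(* The least amount i0 must send to j0: once the edge is removed, a set T
   avoiding j0 but containing the rest of S i0 has to absorb all of a i0. *)
Let eps := \big[Num.max/0]_(T : {set J} | (j0 \notin T) && (S i0 :\ j0 \subset T)) excess T.

Let S' i := if i == i0 then S i :\ j0 else S i.
Let a' i := if i == i0 then a i - eps else a i.
Let b' j := if j == j0 then b j - eps else b j.

Let supply_within_others T :
  supply_within S a T = (if S i0 \subset T then a i0 else 0) + others T.
Proof. exact: supply_within_D1. Qed.

Let supply_within_notin T : j0 \notin T -> supply_within S a T = others T.
Proof.
move=> j0T; rewrite supply_within_others ifN ?add0r //.
by apply: contraNN j0T => /subsetP; apply.
Qed.

Let edge_rest_subset T : j0 \in T -> (S i0 :\ j0 \subset T) = (S i0 \subset T).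
Proof.
move=> j0T; apply/idP/idP => [sT|]; last exact: subset_trans (subD1set _ _).
by rewrite -(setD1K edge0) subUset sub1set j0T.
Qed.

Let eps_ge0 : 0 <= eps.
Proof. exact: bigmax_ge_id. Qed.

Let excess_le_eps T : j0 \notin T -> S i0 :\ j0 \subset T -> excess T <= eps.
Proof. by move=> j0T sT; apply: le_bigmax_cond; rewrite j0T sT. Qed.

Let eps_le_supply : eps <= a i0.
Proof. by apply: bigmax_le => // T _; have := hall T; rewrite /excess; lra. Qed.

Let eps_le_demand : eps <= b j0.
Proof.
apply: bigmax_le => // T /andP [j0T sT].
have := hall (j0 |: T); rewrite /demand_on big_setU1 //= supply_within_others.
have sU : S i0 \subset j0 |: T.
  by rewrite -edge_rest_subset ?setU11 // (subset_trans sT) ?subsetU1.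
rewrite sU /excess (supply_within_notin j0T) /others.
have := partial_supply_mono (fun i => i != i0) S a_ge0 (subsetUr [set j0] T).
rewrite /demand_on; lra.
Qed.

Let eps_le_slack T : j0 \in T -> ~~ (S i0 \subset T) ->
  eps <= demand_on b T - supply_within S a T.
Proof.
move=> j0T nsT; apply: bigmax_le => [|T1 /andP [j0T1 sT1]]; first by have := hall T; lra.
have sU : S i0 \subset T1 :|: T.
  by rewrite -edge_rest_subset ?inE ?j0T ?orbT // (subset_trans sT1) ?subsetUl.
have := hall (T1 :|: T); have := hall (T1 :&: T).
rewrite /excess (supply_within_notin j0T1) !supply_within_others sU (negbTE nsT).
rewrite subsetI (negbTE nsT) andbF /=.
have := partial_supply_supermodular (fun i => i != i0) S a_ge0 T1 T.
have := demand_on_modular b T1 T.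
rewrite /others; lra.
Qed.

Let supply_within_reduced T : supply_within S' a' T =
  (if S i0 :\ j0 \subset T then a i0 - eps else 0) + others T.
Proof.
rewrite (supply_within_D1 _ _ i0) /S' /a' !eqxx; congr (_ + _).
by apply: eq_big => [i|i /andP [/negbTE -> _]] //; case: eqP.
Qed.

Let demand_on_reduced T : demand_on b' T = demand_on b T - (if j0 \in T then eps else 0).
Proof.
rewrite /demand_on; case: ifPn => j0T.
  rewrite !(big_setD1 j0 j0T) /= /b' eqxx (eq_bigr b) => [|j /setD1P [/negbTE -> _] //].
  lra.
by rewrite subr0; apply: eq_bigr => j jT; rewrite /b' ifN //; apply: contraNneq j0T => <-.
Qed.

Let hall_reduced : hall_condition S' a' b'.
Proof.
move=> T; rewrite supply_within_reduced demand_on_reduced.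
have := hall T; rewrite supply_within_others.
case: (boolP (j0 \in T)) => j0T.
  rewrite edge_rest_subset //.
  case: ifPn => sT; first lra.
  by have := eps_le_slack j0T sT; rewrite supply_within_others (negbTE sT); lra.
rewrite ifN; last by apply: contraNN j0T => /subsetP; apply.
case: ifPn => sT; last lra.
by have := excess_le_eps j0T sT; rewrite /excess supply_within_notin //; lra.
Qed.

Lemma transport_reduce_edge :
  (forall c d, (forall i, 0 <= c i) -> (forall j, 0 <= d j) ->
     \sum_i c i = \sum_j d j -> hall_condition S' c d ->
     exists alpha, transport_plan S' c d alpha) ->
  \sum_i a i = \sum_j b j -> exists alpha, transport_plan S a b alpha.
Proof.
move=> solve_reduced sum_ab.
have a'_ge0 i : 0 <= a' i.
  by rewrite /a'; case: eqP => [->|_]; [have := eps_le_supply; lra | exact: a_ge0].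
have b'_ge0 j : 0 <= b' j.
  by rewrite /b'; case: eqP => [->|_]; [have := eps_le_demand; lra | exact: b_ge0].
have sum_a' : \sum_i a' i = \sum_i a i - eps.
  rewrite (bigD1 i0) //= [in RHS](bigD1 i0) //= /a' eqxx.
  by rewrite (eq_bigr a) => [|i /negbTE -> //]; lra.
have sum_b' : \sum_j b' j = \sum_j b j - eps.
  rewrite (bigD1 j0) //= [in RHS](bigD1 j0) //= /b' eqxx.
  by rewrite (eq_bigr b) => [|j /negbTE -> //]; lra.
have sum_ab' : \sum_i a' i = \sum_j b' j by rewrite sum_a' sum_b' sum_ab.
have [alpha [alpha_ge0 alpha_supp rows cols]] :=
  solve_reduced _ _ a'_ge0 b'_ge0 sum_ab' hall_reduced.
exists (fun i j => alpha i j + (if (i == i0) && (j == j0) then eps else 0)); split.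
- by move=> i j; rewrite addr_ge0 //; case: ifP => _; [exact: eps_ge0|].
- move=> i j jS; rewrite alpha_supp; last first.
    by rewrite /S'; case: eqP => // _; rewrite in_setD1 (negbTE jS) andbF.
  by case: andP => [[/eqP ij0 /eqP jj0]|]; [move: jS; rewrite ij0 jj0 edge0 | rewrite addr0].
- move=> i; rewrite big_split /= rows /a'; case: eqP => [->|_] /=.
    by rewrite -big_mkcond big_pred1_eq; lra.
  by rewrite big1_eq addr0.
- move=> j; rewrite big_split /= cols /b'; case: eqP => [->|_] /=.
    by under eq_bigr => i _ do rewrite andbT; rewrite -big_mkcond big_pred1_eq; lra.
  by under eq_bigr => i _ do rewrite andbF; rewrite big1_eq addr0.
Qed.

End ReduceEdge.

Theorem hall_transport S a b : (forall i, 0 <= a i) -> (forall j, 0 <= b j) ->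
  \sum_i a i = \sum_j b j -> hall_condition S a b -> exists alpha, transport_plan S a b alpha.
Proof.
move: {-1}(\sum_i #|S i|)%N (leqnn (\sum_i #|S i|)) => E.
elim: E S a b => [|E IH] S a b nedges a_ge0 b_ge0 sum_ab hall;
  have [[i0 j0] /= edge0|no_edge] := pickP (fun e : I * J => e.2 \in S e.1);
  try by exists (fun _ _ => 0);
    apply: transport_plan_no_edges => // i j; exact/negbT/(no_edge (i, j)).
- have : (0 < #|S i0|)%N by apply/card_gt0P; exists j0.
  by move: nedges; rewrite (bigD1 i0) //=; lia.
- apply: (transport_reduce_edge a_ge0 b_ge0 hall edge0) sum_ab => c d c_ge0 d_ge0 sum_cd hall_cd.
  apply: IH hall_cd => //; rewrite (bigD1 i0) //= eqxx.
  rewrite (eq_bigr (fun i => #|S i|)) => [|i /negbTE -> //].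
  by move: nedges; rewrite (bigD1 i0) //= (cardsD1 j0) edge0; lia.
Qed.

Lemma transport_plan_sums_on S a b alpha : transport_plan S a b alpha ->
  (forall i, \sum_(j in S i) alpha i j = a i) /\
  (forall l, \sum_i \sum_(j in S i) alpha i j * (j == l)%:R = b l).
Proof.
case=> _ supp rows cols.
have on_S i (F : J -> R) : \sum_(j in S i) alpha i j * F j = \sum_j alpha i j * F j.
  by rewrite big_mkcond; apply: eq_bigr => j _; case: ifPn => // /supp ->; rewrite mul0r.
split=> [i|l]; first by rewrite -rows big_mkcond; apply: eq_bigr => j _; case: ifPn => // /supp ->.
rewrite -cols; apply: eq_bigr => i _; rewrite on_S (bigD1 l) //= eqxx mulr1.
by rewrite big1 ?addr0 // => j /negbTE ->; rewrite mulr0.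
Qed.

Lemma ler_sum_term (U : finType) (F : U -> R) u : (forall v, 0 <= F v) -> F u <= \sum_v F v.
Proof. by move=> F_ge0; rewrite (bigD1 u) //= lerDl sumr_ge0. Qed.

Lemma ler_sum_in (U : finType) (A : {set U}) (F : U -> R) :
  (forall u, 0 <= F u) -> \sum_(u in A) F u <= \sum_u F u.
Proof. by move=> F_ge0; rewrite big_mkcond; apply: ler_sum => u _; case: ifP. Qed.

Lemma exists_pos_lower_bound (U : finType) (P : pred U) (f : U -> R) :
  (forall u, P u -> 0 < f u) -> exists2 e, 0 < e & forall u, P u -> e <= f u.
Proof.
move=> f_gt0; exists (\big[Num.min/1]_(u | P u) f u); last by move=> u Pu; apply: bigmin_le_cond.
by elim/big_ind: _ => // x y x_gt0 y_gt0; rewrite lt_min x_gt0 y_gt0.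
Qed.

Section SubtractFlow.
Variables (S : I -> {set J}) (a : I -> R) (b : J -> R) (E : I -> J -> R) (c : R).
Hypotheses (E_ge0 : forall i j, 0 <= E i j) (E_le : \sum_i \sum_j E i j <= c).

Let a' i := a i - \sum_j E i j.
Let b' j := b j - \sum_i E i j.

Lemma sum_sub_flow : \sum_i a i = \sum_j b j -> \sum_i a' i = \sum_j b' j.
Proof. by move=> sum_ab; rewrite !sumrB sum_ab exchange_big. Qed.

Lemma hall_condition_sub_flow : (forall i, S i != set0) -> \sum_i a i = \sum_j b j ->
  (forall T, T != set0 -> T != setT -> c <= demand_on b T - supply_within S a T) ->
  hall_condition S a' b'.
Proof.
move=> S_neq0 sum_ab slack T; case: (eqVneq T set0) => [->|T_neq0].
  rewrite /supply_within big_pred0 ?/demand_on ?big_set0 // => i.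
  by rewrite subset0 (negbTE (S_neq0 i)).
case: (eqVneq T setT) => [->|T_neqT].
  by rewrite supply_within_setT demand_on_setT sum_sub_flow.
have supply_le : supply_within S a' T <= supply_within S a T.
  by apply: ler_sum => i _; rewrite gerBl sumr_ge0.
have demand_ge : demand_on b T - c <= demand_on b' T.
  have : \sum_(j in T) \sum_i E i j <= c.
    apply: le_trans E_le; rewrite [leRHS]exchange_big; apply: ler_sum_in => j; exact: sumr_ge0.
  by rewrite /demand_on sumrB; lra.
by have := slack T T_neq0 T_neqT; lra.
Qed.

End SubtractFlow.

Lemma ler_sum_row (E : I -> J -> R) i :
  (forall i j, 0 <= E i j) -> \sum_j E i j <= \sum_i \sum_j E i j.
Proof.
by move=> E_ge0; apply: (@ler_sum_term _ (fun i => \sum_j E i j)) => i'; apply: sumr_ge0.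
Qed.

Lemma ler_sum_col (E : I -> J -> R) j :
  (forall i j, 0 <= E i j) -> \sum_i E i j <= \sum_i \sum_j E i j.
Proof. by move=> E_ge0; apply: ler_sum => i _; apply: (@ler_sum_term _ (E i)). Qed.

Lemma positive_margin S a b :
  (forall i, 0 < a i) -> (forall j, 0 < b j) ->
  (forall T, T != set0 -> T != setT -> supply_within S a T < demand_on b T) ->
  exists2 c, 0 < c & [/\ forall i, c <= a i, forall j, c <= b j &
    forall T, T != set0 -> T != setT -> c <= demand_on b T - supply_within S a T].
Proof.
move=> a_gt0 b_gt0 strict_hall.
have [c1 c1_gt0 c1_le] : exists2 c1, 0 < c1 & forall T, (T != set0) && (T != setT) ->
    c1 <= demand_on b T - supply_within S a T.
  by apply: exists_pos_lower_bound => T /andP [T0 T1]; rewrite subr_gt0 strict_hall.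
have [c2 c2_gt0 c2_le] := @exists_pos_lower_bound _ predT a (fun i _ => a_gt0 i).
have [c3 c3_gt0 c3_le] := @exists_pos_lower_bound _ predT b (fun j _ => b_gt0 j).
exists (Num.min c1 (Num.min c2 c3)); first by rewrite !lt_min c1_gt0 c2_gt0 c3_gt0.
split=> [i|j|T T0 T1]; rewrite !ge_min ?c2_le ?c3_le ?orbT //.
by rewrite c1_le ?T0.
Qed.

Theorem positive_transport S a b :
  (forall i, S i != set0) -> (forall i, 0 < a i) -> (forall j, 0 < b j) ->
  \sum_i a i = \sum_j b j ->
  (forall T, T != set0 -> T != setT -> supply_within S a T < demand_on b T) ->
  exists alpha, transport_plan S a b alpha /\ forall i j, j \in S i -> 0 < alpha i j.
Proof.
move=> S_neq0 a_gt0 b_gt0 sum_ab strict_hall.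
have [c c_gt0 [c_le_a c_le_b c_le_slack]] := positive_margin a_gt0 b_gt0 strict_hall.
pose M := (\sum_i #|S i|)%N; pose eps := c / M.+1%:R.
have eps_gt0 : 0 < eps by rewrite divr_gt0 ?ltr0Sn.
pose E i j := if j \in S i then eps else 0.
have E_ge0 i j : 0 <= E i j by rewrite /E; case: ifP => // _; exact: ltW.
have E_le : \sum_i \sum_j E i j <= c.
  rewrite (eq_bigr (fun i => eps *+ #|S i|)) => [|i _]; last by rewrite -big_mkcond sumr_const.
  rewrite sumrMnr -/M -mulr_natr /eps mulrAC ler_pdivrMr ?ltr0Sn // ler_wpM2l ?(ltW c_gt0) //.
  by rewrite ler_nat.
have a'_ge0 i : 0 <= a i - \sum_j E i j.
  by have := ler_sum_row i E_ge0; have := c_le_a i; lra.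
have b'_ge0 j : 0 <= b j - \sum_i E i j.
  by have := ler_sum_col j E_ge0; have := c_le_b j; lra.
have [alpha [alpha_ge0 alpha_supp rows cols]] := hall_transport a'_ge0 b'_ge0
  (sum_sub_flow E sum_ab) (hall_condition_sub_flow E_ge0 E_le S_neq0 sum_ab c_le_slack).
exists (fun i j => alpha i j + E i j); split; first split.
- by move=> i j; rewrite addr_ge0.
- by move=> i j jS; rewrite alpha_supp // /E (negbTE jS) addr0.
- by move=> i; rewrite big_split /= rows subrK.
- by move=> j; rewrite big_split /= cols subrK.
- by move=> i j jS; rewrite /E jS ltr_wpDl.
Qed.

End Transport.

Lemma sum_harmonic_pow2 (R : realFieldType) k :
  k%:R / 2 <= \sum_(m < 2 ^ k) (m.+1%:R : R)^-1.
Proof.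
elim: k => [|k IH]; first by rewrite mul0r sumr_ge0 // => m _; rewrite invr_ge0.
rewrite expnS mul2n -addnn big_split_ord /=.
have tail_ge : 2^-1 <= \sum_(m < 2 ^ k) ((2 ^ k + m).+1%:R : R)^-1.
  have -> : 2^-1 = \sum_(m < 2 ^ k) ((2 ^ k.+1)%:R : R)^-1.
    rewrite sumr_const card_ord -mulr_natr expnS natrM; field.
    by rewrite pnatr_eq0 expn_eq0.
  apply: ler_sum => m _; rewrite lef_pV2 ?posrE ?ltr0Sn ?ltr0n ?expn_gt0 // ler_nat expnS.
  by have := ltn_ord m; lia.
by rewrite -natr1; lra.
Qed.

Lemma harmonic_minorant_unbounded (R : archiRealFieldType) (c : R) (u : nat -> R) :
  0 < c -> (forall m, c / m.+1%:R <= u m) -> ~ exists B, forall N, \sum_(m < N) u m <= B.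
Proof.
move=> c_gt0 u_ge [B sum_le].
have bound_ge0 : 0 <= `|B| * 2 / c by rewrite divr_ge0 ?mulr_ge0 ?(ltW c_gt0).
pose k := Num.Def.archi_bound (`|B| * 2 / c).
have k_big : `|B| * 2 < k%:R * c by rewrite -ltr_pdivrMr // archi_boundP.
have : c * (k%:R / 2) <= \sum_(m < 2 ^ k) u m.
  apply: le_trans (_ : c * \sum_(m < 2 ^ k) (m.+1%:R : R)^-1 <= _).
    by rewrite ler_wpM2l ?(ltW c_gt0) ?sum_harmonic_pow2.
  by rewrite mulr_sumr; apply: ler_sum => m _; exact: u_ge.
have := sum_le (2 ^ k)%N; have := ler_norm B; rewrite mulrC in k_big; lra.
Qed.

Section ShapeMass.
Variables (R : realFieldType) (n : nat).
Implicit Types (L : {set 'I_n}) (x : config n).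

(* The sum over L of the shape coordinates x l - M(x). *)
Definition shape_mass L x : R :=
  \sum_(l in L) (x l)%:R - #|L|%:R / n%:R * \sum_l (x l)%:R.

Lemma shape_mass_balanced L x : balanced x -> shape_mass L x = 0.
Proof.
move=> /forallP x_bal; case: (posnP n) => [n0|n_gt0].
  by rewrite /shape_mass !big1 ?mulr0 ?subr0 // => l;
    have := leq_trans (ltn_ord l) (eq_leq n0).
pose u0 := Ordinal n_gt0.
have x_const u : x u = x u0 by apply/eqP; move/forallP: (x_bal u).
rewrite /shape_mass (eq_bigr (fun _ => (x u0)%:R)) => [|u _]; last by rewrite x_const.
rewrite [X in _ * X](eq_bigr (fun _ => (x u0)%:R)) => [|u _]; last by rewrite x_const.
rewrite !sumr_const card_ord -[_ *+ #|L|]mulr_natr -[_ *+ n]mulr_natr; field.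
by rewrite pnatr_eq0 -lt0n.
Qed.

Lemma card_div_ge0_le1 L : 0 <= (#|L|%:R / n%:R : R) <= 1.
Proof.
rewrite divr_ge0 //=; case: (posnP n) => [n0|n_gt0].
  by rewrite (_ : n%:R = 0) ?invr0 ?mulr0 // n0.
by rewrite ler_pdivrMr ?ltr0n // mul1r ler_nat -[X in (_ <= X)%N]card_ord max_card.
Qed.

Lemma shape_mass_store L x v :
  shape_mass L (store x v) = shape_mass L x + ((v \in L)%:R - #|L|%:R / n%:R).
Proof.
have hit_L : \sum_(l in L) ((l == v)%:R : R) = (v \in L)%:R.
  rewrite big_mkcond (bigD1 v) //= eqxx big1 ?addr0 => [|l /negbTE ->]; last by case: ifP.
  by case: ifP.
have hit : \sum_l ((l == v)%:R : R) = 1.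
  by rewrite (bigD1 v) //= eqxx big1 ?addr0 // => l /negbTE ->.
rewrite /shape_mass.
under eq_bigr => l _ do rewrite ffunE natrD.
under [X in _ * X]eq_bigr => l _ do rewrite ffunE natrD.
by rewrite !big_split /= hit_L hit; ring.
Qed.

Lemma shape_mass_store_norm L x v :
  `|shape_mass L (store x v)| <= `|shape_mass L x| + 1.
Proof.
rewrite shape_mass_store; apply: le_trans (ler_normD _ _) _; rewrite lerD2l ler_norml.
by have /andP[] := card_div_ge0_le1 L; case: (v \in L) => /=; lra.
Qed.

End ShapeMass.

Section Arrivals.
Variables (R : realType) (n K : nat) (lam : 'I_K -> R) (S : 'I_K -> {set 'I_n}).
Variable P : config n -> 'I_K -> 'I_n -> R.
Hypotheses (P_policy : routing_policy S P) (lam_ge0 : forall i, 0 <= lam i).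
Hypothesis lam_sum1 : \sum_i lam i = 1.
Implicit Types (L : {set 'I_n}) (x : config n) (f g : config n -> R).

Definition arrival_mean f x : R :=
  \sum_(i < K) lam i * \sum_(v in S i) P x i v * f (store x v).

Let P_ge0 x i v : 0 <= P x i v := P_policy.1 x i v.
Let P_sum1 x i : \sum_(v in S i) P x i v = 1 := P_policy.2.2.1 x i.

Lemma survS m x : surv lam S P m.+1 x =
  arrival_mean (fun y => if balanced y then 0 else surv lam S P m y) x.
Proof. by []. Qed.

Lemma arrival_mean_le f g x :
  (forall v, f (store x v) <= g (store x v)) -> arrival_mean f x <= arrival_mean g x.
Proof.
move=> fg; apply: ler_sum => i _; rewrite ler_wpM2l //.
by apply: ler_sum => v _; rewrite ler_wpM2l.
Qed.

Lemma arrival_mean_ge0 f x : (forall v, 0 <= f (store x v)) -> 0 <= arrival_mean f x.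
Proof.
by move=> f_ge0; apply: sumr_ge0 => i _; rewrite mulr_ge0 ?sumr_ge0 // => v _; rewrite mulr_ge0.
Qed.

Lemma arrival_meanZ c f x : arrival_mean (fun y => c * f y) x = c * arrival_mean f x.
Proof.
rewrite /arrival_mean mulr_sumr; apply: eq_bigr => i _; rewrite [RHS]mulrCA; congr (_ * _).
by rewrite mulr_sumr; apply: eq_bigr => v _; rewrite mulrCA.
Qed.

Lemma surv_ge0 m x : 0 <= surv lam S P m x.
Proof.
elim: m x => [|m IH] x; first exact: ler01.
by rewrite survS; apply: arrival_mean_ge0 => v; case: ifP.
Qed.

Lemma supply_within_le_hit L x :
  supply_within S lam L <= \sum_i lam i * \sum_(v in S i) P x i v * (v \in L)%:R.
Proof.
rewrite /supply_within big_mkcond; apply: ler_sum => i _; case: ifPn => [SL|_].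
  rewrite (eq_bigr (P x i)) ?P_sum1 ?mulr1 // => v vS.
  by rewrite (subsetP SL v vS) mulr1.
by rewrite mulr_ge0 ?sumr_ge0 // => v _; rewrite mulr_ge0.
Qed.

Lemma arrival_mean_shape_mass L x : arrival_mean (shape_mass R L) x =
  shape_mass R L x + \sum_i lam i * \sum_(v in S i) P x i v * (v \in L)%:R - #|L|%:R / n%:R.
Proof.
set q := #|L|%:R / n%:R; pose hit i := \sum_(v in S i) P x i v * (v \in L)%:R.
have inner i : \sum_(v in S i) P x i v * shape_mass R L (store x v) =
    shape_mass R L x + hit i - q.
  rewrite (eq_bigr (fun v => P x i v * shape_mass R L x + P x i v * (v \in L)%:R - P x i v * q)).
    by rewrite sumrB big_split /= -!mulr_suml P_sum1 !mul1r.
  by move=> v _; rewrite shape_mass_store -/q; ring.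
rewrite /arrival_mean (eq_bigr (fun i => lam i * shape_mass R L x + lam i * hit i - lam i * q)).
  by rewrite sumrB big_split /= -!mulr_suml lam_sum1 !mul1r.
by move=> i _; rewrite inner; ring.
Qed.

Section HeavySet.
Variable L : {set 'I_n}.
Hypothesis L_heavy : #|L|%:R / n%:R <= supply_within S lam L.

(* [stopped_shape_mass m x] is E_x[shape_mass L (X m); tau > m]. *)
Fixpoint stopped_shape_mass m x : R :=
  if m is m'.+1 then
    arrival_mean (fun y => if balanced y then 0 else stopped_shape_mass m' y) x
  else shape_mass R L x.

Lemma shape_mass_le_arrival_mean x : shape_mass R L x <= arrival_mean (shape_mass R L) x.
Proof.
by rewrite arrival_mean_shape_mass; have := supply_within_le_hit L x; have := L_heavy; lra.
Qed.

Lemma shape_mass_le_stopped m x : shape_mass R L x <= stopped_shape_mass m x.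
Proof.
elim: m x => [|m IH] x //=; apply: le_trans (shape_mass_le_arrival_mean x) _.
by apply: arrival_mean_le => v; case: ifP => [/shape_mass_balanced ->|_].
Qed.

Lemma stopped_le_surv m x :
  stopped_shape_mass m x <= (`|shape_mass R L x| + m%:R) * surv lam S P m x.
Proof.
elim: m x => [|m IH] x; first by rewrite /= addr0 mulr1 ler_norm.
rewrite survS -arrival_meanZ /=; apply: arrival_mean_le => v.
case: ifP => _; first by rewrite mulr0.
apply: le_trans (IH _) _; rewrite ler_wpM2r ?surv_ge0 // -natr1.
by have := shape_mass_store_norm R L x v; lra.
Qed.

Lemma shape_mass_le_surv m x :
  shape_mass R L x <= (`|shape_mass R L x| + m%:R) * surv lam S P m x.
Proof. exact: le_trans (shape_mass_le_stopped m x) (stopped_le_surv m x). Qed.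

Theorem heavy_set_not_positive_recurrent :
  L != set0 -> L != setT -> ~ positive_recurrent lam S P.
Proof.
move=> L_neq0 L_neqT PR; have [v0 v0L] := set0Pn _ L_neq0.
pose x0 := store [ffun _ => 0%N] v0; pose q : R := #|L|%:R / n%:R.
have q_lt1 : q < 1.
  rewrite ltr_pdivrMr ?ltr0n ?(leq_ltn_trans (leq0n v0)) // mul1r ltr_nat.
  by rewrite -[X in (_ < X)%N]card_ord -cardsT proper_card // properT.
have mass_x0 : shape_mass R L x0 = 1 - q.
  rewrite shape_mass_store shape_mass_balanced ?v0L ?add0r //.
  by apply/forallP => u; apply/forallP => w; rewrite !ffunE.
have mass_gt0 : 0 < 1 - q by rewrite subr_gt0.
apply: (harmonic_minorant_unbounded (u := fun m => surv lam S P m x0) mass_gt0 _ (PR x0)) => m.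
have := shape_mass_le_surv m x0; have := surv_ge0 m x0.
have /andP[q_ge0 _] : 0 <= q <= 1 := card_div_ge0_le1 R L.
rewrite mass_x0 ger0_norm ?(ltW mass_gt0) // ler_pdivrMr ?ltr0Sn // -natr1 => surv_nonneg mass_le.
have : (1 - q + m%:R) * surv lam S P m x0 <= (m%:R + 1) * surv lam S P m x0.
  by rewrite ler_wpM2r //; lra.
by rewrite mulrC; lra.
Qed.

End HeavySet.

End Arrivals.

Theorem theorem2p3 (R : realType) (n K : nat) (S : 'I_K -> {set 'I_n})
    (lam : 'I_K -> R) :
  (0 < K)%N ->
  (forall i, S i != set0) ->
  \bigcup_(i < K) S i = setT ->
  (forall i, 0 < lam i) ->
  \sum_(i < K) lam i = 1 ->
  ~ (exists alpha : 'I_K -> 'I_n -> R,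
        (forall i v, v \in S i -> 0 < alpha i v) /\
        (forall i, \sum_(v in S i) alpha i v = lam i) /\
        (forall l : 'I_n,
           \sum_(i < K) \sum_(v in S i) alpha i v * (v == l)%:R = n%:R^-1)) ->
  forall P : config n -> 'I_K -> 'I_n -> R,
    routing_policy S P -> ~ positive_recurrent lam S P.
Proof.
move=> K_gt0 S_neq0 _ lam_gt0 lam_sum1 no_solution P P_policy PR; apply: no_solution.
have n_gt0 : (0 < n)%N.
  by have [v _] := set0Pn _ (S_neq0 (Ordinal K_gt0)); apply: leq_ltn_trans (ltn_ord v).
have uniform_gt0 (l : 'I_n) : 0 < n%:R^-1 :> R by rewrite invr_gt0 ltr0n.
have uniform_sum : \sum_i lam i = \sum_(l < n) n%:R^-1.
  by rewrite lam_sum1 sumr_const card_ord -[_ *+ n]mulr_natl mulfV // pnatr_eq0 -lt0n.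
have strict_hall T : T != set0 -> T != setT ->
    supply_within S lam T < demand_on (fun=> n%:R^-1) T.
  move=> T_neq0 T_neqT; rewrite /demand_on sumr_const -[_ *+ #|T|]mulr_natl ltNge.
  apply/negP => heavy.
  exact: heavy_set_not_positive_recurrent P_policy (fun i => ltW (lam_gt0 i)) lam_sum1
    T heavy T_neq0 T_neqT PR.
have [alpha [plan alpha_gt0]] :=
  positive_transport S_neq0 lam_gt0 uniform_gt0 uniform_sum strict_hall.
by exists alpha; split; last exact: transport_plan_sums_on plan.
Qed.
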